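(* For every $k\ge2$ one has $[D^{(k)}_x,D^{(k)}_y]=0$ on $\mathcal E_k$, and also $[D^{( * )}_x,D^{( * )}_y]=0$ on $\mathcal E_*$.
   Context: Let $\mathcal E_1$ be the system $u_y+vu_x=\frac1{v-u}$, $v_y+uv_x=\frac1{u-v}$ with internal coordinates $x,y,u_i=\partial^iu/\partial x^i$, $v_i=\partial^iv/\partial x^i$ ($i\ge0$) and total derivatives $D_x=\partial_x+\sum_i(u_{i+1}\partial_{u_i}+v_{i+1}\partial_{v_i})$, $D_y=\partial_y+\sum_i\big(D_x^i(\tfrac1{v-u}-vu_1)\partial_{u_i}+D_x^i(\tfrac1{u-v}-uv_1)\partial_{v_i}\big)$. Let $\sigma_m=\sum_{i+j=m}u^iv^j$, $\psi^{(1)}=y$, $\psi^{(2)}=x$, and let $\psi^{(k)}$, $k\ge3$, be new coordinates; for $k\ge2$ put $X^{(k)}=\sigma_{k-2}-\sum_{i=1}^{k-3}i\,\sigma_{k-i-3}\psi^{(i)}$ and for $k\ge3$ put $Y^{(k)}=-uv\,X^{(k-1)}-(k-2)\psi^{(k-2)}$. For $k\ge2$, $\mathcal E_k=\mathcal E_1\times\mathbb R^{k-1}$ has the additional coordinates $\psi^{(3)},\dots,\psi^{(k+1)}$ and the vector fields $D^{(k)}_x=D_x+\sum_{i=3}^{k+1}X^{(i)}\partial/\partial\psi^{(i)}$, $D^{(k)}_y=D_y+\sum_{i=3}^{k+1}Y^{(i)}\partial/\partial\psi^{(i)}$; $\mathcal E_*$ is the inverse limit (all $\psi^{(k)}$,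 $k\ge3$) with $D^{( * )}_x,D^{( * )}_y$ defined by the infinite sums. *)

From mathcomp Require Import all_boot all_order all_algebra.
Set Implicit Arguments. Unset Strict Implicit. Unset Printing Implicit Defensive.
Import Order.TTheory GRing.Theory Num.Theory.
Local Open Scope ring_scope.

Section Defs.
Variable A : comUnitRingType.

Definition sigma (u0 v0 : A) (m : nat) : A :=
  \sum_(i < m.+1) u0 ^+ i * v0 ^+ (m - i).

Definition Psi (x y : A) (ps : nat -> A) (k : nat) : A :=
  if k == 1%N then y else if k == 2%N then x else ps k.

Definition Xk (x y u0 v0 : A) (ps : nat -> A) (k : nat) : A :=
  sigma u0 v0 (k - 2) -
  \sum_(1 <= i < k - 2) i%:R * sigma u0 v0 (k - i - 3) * Psi x y ps i.

Definition Yk (x y u0 v0 : A) (ps : nat -> A) (k : nat) : A :=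
  - (u0 * v0) * Xk x y u0 v0 ps (k - 1) - (k - 2)%:R * Psi x y ps (k - 2).

Definition derivation (D : A -> A) : Prop :=
  (forall a b, D (a + b) = D a + D b) /\
  (forall a b, D (a * b) = D a * b + a * D b).

(* Dx, Dy act on the coordinate functions x, y, u_i, v_i, psi^(k) (k in P)
   exactly as the vector fields D_x^(.) and D_y^(.) of the paper do. *)
Definition total_derivatives (P : nat -> bool) (x y : A) (u v ps : nat -> A)
  (Dx Dy : A -> A) : Prop :=
  [/\ derivation Dx /\ derivation Dy,
      (v 0%N - u 0%N) \is a GRing.unit,
      [/\ Dx x = 1, Dx y = 0, Dy x = 0 & Dy y = 1],
      [/\ forall i, Dx (u i) = u i.+1,
          forall i, Dx (v i) = v i.+1,
          forall i, Dy (u i) = iter i Dx ((v 0%N - u 0%N)^-1 - v 0%N * u 1%N) &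
          forall i, Dy (v i) = iter i Dx ((u 0%N - v 0%N)^-1 - u 0%N * v 1%N)] &
      forall k, P k ->
        Dx (ps k) = Xk x y (u 0%N) (v 0%N) ps k /\
        Dy (ps k) = Yk x y (u 0%N) (v 0%N) ps k].

Definition commute_on_coords (P : nat -> bool) (x y : A) (u v ps : nat -> A)
  (Dx Dy : A -> A) : Prop :=
  [/\ Dx (Dy x) = Dy (Dx x), Dx (Dy y) = Dy (Dx y),
      forall i, Dx (Dy (u i)) = Dy (Dx (u i)),
      forall i, Dx (Dy (v i)) = Dy (Dx (v i)) &
      forall k, P k -> Dx (Dy (ps k)) = Dy (Dx (ps k))].

End Defs.

Definition Ek_index (k : nat) : nat -> bool := fun i => (3 <= i <= k.+1)%N.
Definition Estar_index : nat -> bool := fun i => (3 <= i)%N.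

From mathcomp Require Import all_boot all_order all_algebra.
From mathcomp Require Import ring zify.
Set Implicit Arguments. Unset Strict Implicit. Unset Printing Implicit Defensive.
Import GRing.Theory.
Local Open Scope ring_scope.

(* Put p = u + v and q = u v.  The system gives D_y p = - D_x q and
   D_y q + p D_x q - q D_x p = 1, while sigma_(m+2) = p sigma_(m+1) - q sigma_m
   makes X^(k) satisfy X^(k+2) = p X^(k+1) - q X^(k) - (k-1) psi^(k-1).
   On psi^(k) the commutator is D_y X^(k) - D_x Y^(k); using the three
   identities above, this defect d_k obeys d_(k+2) = p d_(k+1) - q d_k for
   k >= 4, and it vanishes for k = 3, 4, 5, hence for all k. *)

Section Derivation.
Variables (A : comUnitRingType) (D : A -> A).
Hypothesis D_der : derivation D.

Lemma derivationD a b : D (a + b) = D a + D b. Proof. exact: D_der.1. Qed.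

Lemma derivationM a b : D (a * b) = D a * b + a * D b. Proof. exact: D_der.2. Qed.

Lemma derivation0 : D 0 = 0.
Proof. by apply: (addrI (D 0)); rewrite -derivationD !addr0. Qed.

Lemma derivationN a : D (- a) = - D a.
Proof. by apply: (addrI (D a)); rewrite -derivationD !subrr derivation0. Qed.

Lemma derivation1 : D 1 = 0.
Proof. by apply: (addIr (D 1)); rewrite add0r -{3}[1]mulr1 derivationM mulr1 mul1r. Qed.

Lemma derivation_nat n : D n%:R = 0.
Proof.
by elim: n => [|n IHn]; rewrite ?derivation0 // mulrS derivationD derivation1 IHn addr0.
Qed.

End Derivation.

Section Sigma.
Variables (A : comUnitRingType) (a b : A).
Local Notation s := (sigma a b).

Lemma sigma0 : s 0 = 1.
Proof. by rewrite /sigma big_ord1 !expr0 mulr1. Qed.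

Lemma sigmaS m : s m.+1 = a * s m + b ^+ m.+1.
Proof.
rewrite /sigma big_ord_recl expr0 mul1r subn0 addrC mulr_sumr; congr (_ + _).
by apply: eq_bigr => i _; rewrite subSS exprS mulrA.
Qed.

Lemma sigma1 : s 1 = a + b.
Proof. by rewrite sigmaS sigma0 mulr1 expr1. Qed.

Lemma sigmaSS m : s m.+2 = (a + b) * s m.+1 - a * b * s m.
Proof. by rewrite !sigmaS (exprS b m.+1); ring. Qed.

Definition sigma_conv (c : nat -> A) n := \sum_(i < n) c i * s (n.-1 - i).

Lemma sigma_convSS c n :
  sigma_conv c n.+2 = (a + b) * sigma_conv c n.+1 - a * b * sigma_conv c n + c n.+1.
Proof.
rewrite /sigma_conv !big_ord_recr /= !subnn subSn // subnn sigma0 sigma1.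
have -> : \sum_(i < n) c i * s (n.+1 - i)
        = (a + b) * \sum_(i < n) c i * s (n - i) - a * b * \sum_(i < n) c i * s (n.-1 - i).
  rewrite !mulr_sumr -sumrB; apply: eq_bigr => i _.
  have -> : (n.+1 - i = (n.-1 - i).+2)%N by have := ltn_ord i; lia.
  have -> : (n - i = (n.-1 - i).+1)%N by have := ltn_ord i; lia.
  by rewrite sigmaSS; ring.
ring.
Qed.

End Sigma.

Section XkRecurrence.
Variables (A : comUnitRingType) (x y a b : A) (ps : nat -> A).
Local Notation X := (Xk x y a b ps).
Local Notation Ps := (Psi x y ps).

Lemma Psi_ge3 j : (3 <= j)%N -> Ps j = ps j.
Proof. by case: j => [|[|[|j]]]. Qed.

Lemma Xk_conv n : X n.+2 = sigma a b n - sigma_conv a b (fun i => i%:R * Ps i) n.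
Proof.
rewrite /Xk /sigma_conv subn2; congr (_ - _).
case: n => [|n]; first by rewrite big_geq // big_ord0.
rewrite big_ord_recl !mul0r add0r big_add1 big_mkord.
by apply: eq_bigr => i _; rewrite lift0 mulrAC subnAC !subSS subn0.
Qed.

Lemma Xk2 : X 2 = 1.
Proof. by rewrite Xk_conv sigma0 /sigma_conv big_ord0 subr0. Qed.

Lemma Xk3 : X 3 = a + b.
Proof. by rewrite Xk_conv sigma1 /sigma_conv big_ord1 !mul0r subr0. Qed.

Lemma Xk_rec n : X n.+4 = (a + b) * X n.+3 - a * b * X n.+2 - n.+1%:R * Ps n.+1.
Proof. by rewrite !Xk_conv sigmaSS sigma_convSS; ring. Qed.

End XkRecurrence.

Section Compatibility.
Variables (A : comUnitRingType) (Dx Dy : A -> A) (p q x y : A) (X Ps : nat -> A).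
Hypotheses (Dx_der : derivation Dx) (Dy_der : derivation Dy).
Hypotheses (Dx_x : Dx x = 1) (Dx_y : Dx y = 0) (Dy_x : Dy x = 0) (Dy_y : Dy y = 1).
Hypothesis Dy_p : Dy p = - Dx q.
Hypothesis Dy_q : Dy q = 1 - p * Dx q + q * Dx p.
Hypotheses (X2 : X 2 = 1) (X3 : X 3 = p).
Hypothesis X_rec : forall n, X n.+4 = p * X n.+3 - q * X n.+2 - n.+1%:R * Ps n.+1.
Hypotheses (Ps1 : Ps 1 = y) (Ps2 : Ps 2 = x).

Let Y k := - q * X (k - 1) - (k - 2)%:R * Ps (k - 2).

Variable N : nat.
Hypothesis Dx_Ps : forall j, (3 <= j <= N)%N -> Dx (Ps j) = X j.
Hypothesis Dy_Ps : forall j, (3 <= j <= N)%N -> Dy (Ps j) = Y j.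

Let defect k := Dy (X k) - Dx (Y k).

Let YS k : Y k.+3 = - q * X k.+2 - k.+1%:R * Ps k.+1.
Proof. by rewrite /Y subn1 subn2. Qed.

Local Ltac expand_derivatives :=
  rewrite ?(derivationD Dx_der, derivationN Dx_der, derivationM Dx_der,
            derivation1 Dx_der, derivation_nat Dx_der,
            derivationD Dy_der, derivationN Dy_der, derivationM Dy_der,
            derivation1 Dy_der, derivation_nat Dy_der,
            Dx_x, Dx_y, Dy_x, Dy_y, Dy_p, Dy_q).

Let defect3 : defect 3 = 0.
Proof. rewrite /defect YS X3 X2 Ps1; expand_derivatives; ring. Qed.

Let defect4 : defect 4 = 0.
Proof. rewrite /defect YS X_rec X3 X2 Ps1 Ps2; expand_derivatives; ring. Qed.

Let defect5 : (3 <= N)%N -> defect 5 = 0.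
Proof.
move=> N_ge3; have Dx_Ps3 : Dx (Ps 3) = p by rewrite Dx_Ps ?N_ge3.
rewrite /defect YS !X_rec X3 X2 Ps1 Ps2; expand_derivatives; rewrite Dx_Ps3; ring.
Qed.

Let Dx_Ps_ge2 j : (2 <= j <= N)%N -> Dx (Ps j) = X j.
Proof. by case: j => [|[|[|j]]] // j_le; [rewrite Ps2 Dx_x X2 | apply: Dx_Ps]. Qed.

Let defect_rec n : (2 <= n)%N -> (n.+2 <= N)%N ->
  defect n.+4 = p * defect n.+3 - q * defect n.+2.
Proof.
case: n => [|[|n]] // _ n_le.
have [Dx_Ps2 Dx_Ps3 Dx_Ps4] :
    [/\ Dx (Ps n.+2) = X n.+2, Dx (Ps n.+3) = X n.+3 & Dx (Ps n.+4) = X n.+4].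
  by split; apply: Dx_Ps_ge2; lia.
have Dy_Ps3 : Dy (Ps n.+3) = Y n.+3 by apply: Dy_Ps; lia.
rewrite /defect !YS !X_rec; expand_derivatives.
rewrite Dx_Ps2 Dx_Ps3 Dx_Ps4 Dy_Ps3 YS X_rec; ring.
Qed.

Lemma Dy_X_eq_Dx_Y k : (3 <= k <= N.+2)%N -> Dy (X k) = Dx (Y k).
Proof.
move=> /andP[k_ge3 k_le]; apply/eqP; rewrite -subr_eq0 -/(defect k); apply/eqP.
elim/ltn_ind: k k_ge3 k_le => -[|[|[|[|[|[|n]]]]]] IH k_ge3 k_le;
  [by [] .. | exact: defect3 | exact: defect4 | exact: defect5 k_le |].
rewrite defect_rec ?IH ?mulr0 ?subr0 //; lia.
Qed.

End Compatibility.

Section SumProduct.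
Variables (A : comUnitRingType) (Dx Dy : A -> A) (u v u1 v1 : A).
Hypotheses (Dx_der : derivation Dx) (Dy_der : derivation Dy).
Hypothesis vu_unit : (v - u) \is a GRing.unit.
Hypotheses (Dx_u : Dx u = u1) (Dx_v : Dx v = v1).
Hypotheses (Dy_u : Dy u = (v - u)^-1 - v * u1) (Dy_v : Dy v = (u - v)^-1 - u * v1).

Lemma Dy_add : Dy (u + v) = - Dx (u * v).
Proof.
rewrite (derivationD Dy_der) (derivationM Dx_der).
by rewrite Dy_u Dy_v Dx_u Dx_v -[u - v]opprB invrN; ring.
Qed.

Lemma Dy_mul : Dy (u * v) = 1 - (u + v) * Dx (u * v) + u * v * Dx (u + v).
Proof.
rewrite (derivationM Dy_der) (derivationM Dx_der) (derivationD Dx_der).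
rewrite Dy_u Dy_v Dx_u Dx_v -[u - v]opprB invrN -[in RHS](mulVr vu_unit).
by ring.
Qed.

End SumProduct.

Lemma total_derivatives_commute (A : comUnitRingType) (P : nat -> bool)
    (x y : A) (u v ps : nat -> A) (Dx Dy : A -> A) :
  (forall k, P k -> (3 <= k)%N) ->
  (forall k j, P k -> (3 <= j)%N -> (j.+2 <= k)%N -> P j) ->
  total_derivatives P x y u v ps Dx Dy -> commute_on_coords P x y u v ps Dx Dy.
Proof.
move=> P_ge3 P_down [[Dx_der Dy_der] vu_unit [Dx_x Dx_y Dy_x Dy_y]].
move=> [Dx_u Dx_v Dy_u Dy_v] Dx_Dy_ps.
split.
- by rewrite Dy_x Dx_x (derivation0 Dx_der) (derivation1 Dy_der).
- by rewrite Dy_y Dx_y (derivation1 Dx_der) (derivation0 Dy_der).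
- by move=> i; rewrite Dy_u Dx_u Dy_u.
- by move=> i; rewrite Dy_v Dx_v Dy_v.
move=> k Pk; rewrite (Dx_Dy_ps k Pk).1 (Dx_Dy_ps k Pk).2 /Yk; symmetry.
have Dy_p := Dy_add Dx_der Dy_der (Dx_u 0%N) (Dx_v 0%N) (Dy_u 0%N) (Dy_v 0%N).
have Dy_q := Dy_mul Dx_der Dy_der vu_unit (Dx_u 0%N) (Dx_v 0%N) (Dy_u 0%N) (Dy_v 0%N).
have k_ge3 := P_ge3 k Pk.
have Pj j : (3 <= j <= k - 2)%N -> P j.
  by case/andP=> j_ge3 j_le; apply: P_down Pk j_ge3 _; lia.
apply: (Dy_X_eq_Dx_Y Dx_der Dy_der Dx_x Dx_y Dy_x Dy_y Dy_p Dy_q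
          (Xk2 _ _ _ _ _) (Xk3 _ _ _ _ _) (@Xk_rec _ _ _ _ _ _) erefl erefl (N := (k - 2)%N)).
- by move=> j j_range; rewrite Psi_ge3 ?(Dx_Dy_ps j _).1 ?Pj //; case/andP: j_range.
- by move=> j j_range; rewrite Psi_ge3 ?(Dx_Dy_ps j _).2 ?Pj //; case/andP: j_range.
- by rewrite k_ge3; lia.
Qed.

Theorem mainTheorem5 :
  (forall (k : nat), (2 <= k)%N ->
     forall (A : comUnitRingType) (x y : A) (u v ps : nat -> A) (Dx Dy : A -> A),
       total_derivatives (Ek_index k) x y u v ps Dx Dy ->
       commute_on_coords (Ek_index k) x y u v ps Dx Dy) /\
  (forall (A : comUnitRingType) (x y : A) (u v ps : nat -> A) (Dx Dy : A -> A),
       total_derivatives Estar_index x y u v ps Dx Dy ->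
       commute_on_coords Estar_index x y u v ps Dx Dy).
Proof.
split=> [K _ | ] A x y u v ps Dx Dy; apply: total_derivatives_commute;
  rewrite /Ek_index /Estar_index => *; lia.
Qed.
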